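(* Let $X$ be an infinite dimensional real Banach space. Then $dens(X)\leq 2^{biort(X)}$.
   Context: $dens(X)$ is the least cardinality of a norm-dense subset of $X$. A biorthogonal system in $X$ is a family $(x_i,x_i^* )_{i\in I}\subseteq X\times X^*$ with $x_i^*(x_i)=1$ for all $i$ and $x_i^*(x_j)=0$ for $i\neq j$. $biort(X)$ is the supremum of $|I|$ over all biorthogonal systems $(x_i,x_i^* )_{i\in I}$ in $X$. *)

From Stdlib Require Import Reals List.
Open Scope R_scope.

Record BanachSpace := {
  carrier :> Type;
  vzero : carrier;
  vadd : carrier -> carrier -> carrier;
  vopp : carrier -> carrier;
  vscale : R -> carrier -> carrier;
  vnorm : carrier -> R;
  vadd_assoc : forall x y z, vadd x (vadd y z) = vadd (vadd x y) z;
  vadd_comm : forall x y, vadd x y = vadd y x;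
  vadd_zero : forall x, vadd x vzero = x;
  vadd_opp : forall x, vadd x (vopp x) = vzero;
  vscale_one : forall x, vscale 1 x = x;
  vscale_assoc : forall a b x, vscale a (vscale b x) = vscale (a * b) x;
  vscale_addv : forall a x y, vscale a (vadd x y) = vadd (vscale a x) (vscale a y);
  vscale_adds : forall a b x, vscale (a + b) x = vadd (vscale a x) (vscale b x);
  vnorm_nonneg : forall x, 0 <= vnorm x;
  vnorm_eq0 : forall x, vnorm x = 0 -> x = vzero;
  vnorm_scale : forall a x, vnorm (vscale a x) = Rabs a * vnorm x;
  vnorm_triangle : forall x y, vnorm (vadd x y) <= vnorm x + vnorm y;
  vcomplete : forall u : nat -> carrier,
    (forall eps, eps > 0 -> exists N, forall n m, (n >= N)%nat -> (m >= N)%nat ->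
        vnorm (vadd (u n) (vopp (u m))) < eps) ->
    exists l, forall eps, eps > 0 -> exists N, forall n, (n >= N)%nat ->
        vnorm (vadd (u n) (vopp l)) < eps
}.

Definition vsub {X : BanachSpace} (x y : X) : X := vadd X x (vopp X y).

Fixpoint lincomb {X : BanachSpace} (l : list (R * X)) : X :=
  match l with
  | nil => vzero X
  | (a, v) :: t => vadd X (vscale X a v) (lincomb t)
  end.

Definition in_span {X : BanachSpace} (l : list X) (x : X) : Prop :=
  exists c : list R, length c = length l /\ x = lincomb (combine c l).

Definition infinite_dimensional (X : BanachSpace) : Prop :=
  forall l : list X, exists x : X, ~ in_span l x.

Definition is_dual_elem {X : BanachSpace} (f : X -> R) : Prop :=
  (forall x y, f (vadd X x y) = f x + f y) /\
  (forall a x, f (vscale X a x) = a * f x) /\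
  (exists C, forall x, Rabs (f x) <= C * vnorm X x).

Definition biorthogonal {X : BanachSpace} {I : Type}
  (x : I -> X) (xs : I -> (X -> R)) : Prop :=
  (forall i, is_dual_elem (xs i)) /\
  (forall i, xs i (x i) = 1) /\
  (forall i j, i <> j -> xs i (x j) = 0).

Definition dense {X : BanachSpace} (D : X -> Prop) : Prop :=
  forall x eps, eps > 0 -> exists d, D d /\ vnorm X (vsub x d) < eps.

Definition card_le (A B : Type) : Prop := exists f : A -> B, forall a b, f a = f b -> a = b.

(* K bounds biort(X): every biorthogonal system has |I| <= |K|. *)
Definition biort_bound (X : BanachSpace) (K : Type) : Prop :=
  forall (I : Type) (x : I -> X) (xs : I -> (X -> R)), biorthogonal x xs -> card_le I K.

(* We prove the stronger bound |X| <= 2^{biort(X)}, taking all of X as dense set.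
   Fix a maximal biorthogonal system (x_i, f_i)_{i in I}, so |I| <= biort(X).
   If f_i y = 0 for all i, then y lies in the closed span of the x_i: otherwise
   Hahn-Banach gives a functional separating y from that span, and the pair
   (y, f) would enlarge the system.  Hence x is determined by its coordinates
   (f_i x)_i and by a sequence of finite combinations of the x_i approximating
   x - r, where r is any vector with the same coordinates; this injects X into
   R^I * (list (R * I))^nat.  Infinite dimensionality yields an infinite
   biorthogonal sequence, so biort(X) is infinite and absorbs countable
   factors, and that product has cardinality at most 2^{biort(X)}. *)

From Stdlib Require Import Reals List Lra Lia ZArith.
From Stdlib Require Import Classical ClassicalEpsilon FunctionalExtensionality ProofIrrelevance.
From Stdlib Require Cantor.
From mathcomp Require ssreflect ssrbool boolp classical_sets.
Set Bullet Behavior "Strict Subproofs".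
Open Scope R_scope.

Notation "x +v y" := (vadd _ x y) (at level 50, left associativity).
Notation "a *v x" := (vscale _ a x) (at level 40, no associativity).

Module ZornLemma.
Import mathcomp.boot.ssreflect mathcomp.boot.ssrbool mathcomp.classical.boolp mathcomp.classical.classical_sets.

Lemma zorn_preorder (T : Type) (t0 : T) (le : T -> T -> Prop) :
  (forall t, le t t) -> (forall r s t, le r s -> le s t -> le r t) ->
  (forall C : T -> Prop, (forall s t, C s -> C t -> le s t \/ le t s) ->
     exists t, forall s, C s -> le s t) ->
  exists t, forall s, le t s -> le s t.
Proof.
move=> refl trans chains.
have lerefl x : `[< le x x >] by apply/asboolP.
have letrans r s u : `[< le r s >] -> `[< le s u >] -> `[< le r u >].
  by move=> /asboolP h1 /asboolP h2; apply/asboolP; exact: trans h2.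
have [C HC|t Ht] := @ZL_preorder T t0 (fun a b => `[< le a b >]) lerefl letrans.
- have [|t Ht] := chains C.
    by move=> s u Cs Cu; have [/asboolP|/asboolP] := HC s u Cs Cu; [left|right].
  by exists t => s Cs; apply/asboolP; exact: Ht.
- by exists t => s /asboolP /Ht /asboolP.
Qed.
End ZornLemma.
Import ZornLemma (zorn_preorder).

Section VectorAlgebra.
Variable X : BanachSpace.

Lemma vadd_zero_l (x : X) : vzero X +v x = x.
Proof. rewrite vadd_comm; apply vadd_zero. Qed.

Lemma vadd_cancel_l (a x y : X) : a +v x = a +v y -> x = y.
Proof.
  intro H. rewrite <- (vadd_zero_l x), <- (vadd_zero_l y), <- (vadd_opp X a), (vadd_comm X a).
  rewrite <- !vadd_assoc, H. reflexivity.
Qed.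

Lemma vscale_zero_l (x : X) : 0 *v x = vzero X.
Proof.
  apply (vadd_cancel_l (0 *v x)). rewrite vadd_zero, <- vscale_adds.
  f_equal; ring.
Qed.

Lemma vscale_zero_r (a : R) : a *v vzero X = vzero X.
Proof.
  apply (vadd_cancel_l (a *v vzero X)).
  rewrite vadd_zero, <- vscale_addv, vadd_zero. reflexivity.
Qed.

Lemma vopp_scale (x : X) : vopp X x = (-1) *v x.
Proof.
  apply (vadd_cancel_l x). rewrite vadd_opp.
  rewrite <- (vscale_one X x) at 1. rewrite <- vscale_adds.
  replace (1 + -1) with 0 by ring. rewrite vscale_zero_l. reflexivity.
Qed.

Lemma vnorm_zero : vnorm X (vzero X) = 0.
Proof. rewrite <- (vscale_zero_l (vzero X)), vnorm_scale, Rabs_R0. ring. Qed.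

Lemma vnorm_opp (x : X) : vnorm X ((-1) *v x) = vnorm X x.
Proof. rewrite vnorm_scale, Rabs_left by lra. ring. Qed.

(* Reflexive decision of vector identities: a vector expression over atoms is
   normalised to its list of (coefficient, atom) pairs, and two expressions are
   equal as soon as the total coefficients of every atom agree (a ring goal). *)
Inductive vexpr :=
  | EAtom (n : nat) | EZero | EAdd (a b : vexpr) | EScale (r : R) (a : vexpr) | EOpp (a : vexpr).

Fixpoint veval (env : list X) (e : vexpr) : X :=
  match e with
  | EAtom n => nth n env (vzero X)
  | EZero => vzero X
  | EAdd a b => veval env a +v veval env b
  | EScale r a => r *v veval env a
  | EOpp a => vopp X (veval env a)
  end.

Fixpoint vnf (e : vexpr) : list (R * nat) :=
  match e with
  | EAtom n => (1, n) :: nil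
  | EZero => nil
  | EAdd a b => vnf a ++ vnf b
  | EScale r a => map (fun p => (r * fst p, snd p)) (vnf a)
  | EOpp a => map (fun p => (-1 * fst p, snd p)) (vnf a)
  end.

Fixpoint nf_eval (env : list X) (l : list (R * nat)) : X :=
  match l with
  | nil => vzero X
  | (c, i) :: t => c *v nth i env (vzero X) +v nf_eval env t
  end.

Lemma nf_eval_app env l1 l2 : nf_eval env (l1 ++ l2) = nf_eval env l1 +v nf_eval env l2.
Proof.
  induction l1 as [|[c i] t IH]; simpl; [now rewrite vadd_zero_l|].
  now rewrite IH, vadd_assoc.
Qed.

Lemma nf_eval_scale env r l :
  nf_eval env (map (fun p => (r * fst p, snd p)) l) = r *v nf_eval env l.
Proof.
  induction l as [|[c i] t IH]; simpl; [now rewrite vscale_zero_r|].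
  now rewrite IH, vscale_addv, vscale_assoc.
Qed.

Lemma vnf_correct env e : veval env e = nf_eval env (vnf e).
Proof.
  induction e; simpl.
  - now rewrite vscale_one, vadd_zero.
  - reflexivity.
  - now rewrite nf_eval_app, IHe1, IHe2.
  - now rewrite nf_eval_scale, IHe.
  - now rewrite nf_eval_scale, IHe, vopp_scale.
Qed.

Fixpoint coef (l : list (R * nat)) (n : nat) : R :=
  match l with
  | nil => 0
  | (c, i) :: t => (if Nat.eqb i n then c else 0) + coef t n
  end.

Fixpoint csum (env : list X) (f : nat -> R) (N : nat) : X :=
  match N with
  | O => vzero X
  | S N' => csum env f N' +v f N' *v nth N' env (vzero X)
  end.

Lemma csum_ext env f g N : (forall n, (n < N)%nat -> f n = g n) -> csum env f N = csum env g N.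
Proof.
  induction N; intro H; simpl; [reflexivity|].
  rewrite IHN, H; [reflexivity|lia|]. intros; apply H; lia.
Qed.

Lemma vadd_swap_middle (a b c d : X) : (a +v b) +v (c +v d) = (a +v c) +v (b +v d).
Proof.
  rewrite !vadd_assoc. f_equal. rewrite <- !vadd_assoc. f_equal. apply vadd_comm.
Qed.

Lemma csum_add env f g N : csum env (fun n => f n + g n) N = csum env f N +v csum env g N.
Proof.
  induction N; simpl; [now rewrite vadd_zero|].
  now rewrite IHN, vscale_adds, vadd_swap_middle.
Qed.

Lemma csum_delta env c i N :
  csum env (fun n => if Nat.eqb i n then c else 0) N =
  if Nat.ltb i N then c *v nth i env (vzero X) else vzero X.
Proof.
  induction N; simpl; [reflexivity|].
  rewrite IHN. destruct (Nat.eqb_spec i N) as [->|ne].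
  - rewrite Nat.ltb_irrefl, (proj2 (Nat.ltb_lt N (S N))) by lia. apply vadd_zero_l.
  - rewrite vscale_zero_l, vadd_zero.
    destruct (Nat.ltb_spec i N); destruct (Nat.ltb_spec i (S N)); auto; lia.
Qed.

Definition atoms_below (N : nat) (l : list (R * nat)) := forall c i, In (c, i) l -> (i < N)%nat.

Lemma nf_eval_csum env N l : atoms_below N l -> nf_eval env l = csum env (coef l) N.
Proof.
  induction l as [|[c i] t IH]; intro H; simpl.
  - clear H. induction N; simpl; [reflexivity|].
    now rewrite <- IHN, vscale_zero_l, vadd_zero.
  - rewrite csum_add, csum_delta, (proj2 (Nat.ltb_lt i N)) by (apply (H c i); now left).
    rewrite IH; [reflexivity|]. intros c' i' Hi; apply (H c' i'); now right.
Qed.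

Fixpoint atoms_ok (N : nat) (e : vexpr) : bool :=
  match e with
  | EAtom n => Nat.ltb n N
  | EZero => true
  | EAdd a b => andb (atoms_ok N a) (atoms_ok N b)
  | EScale _ a | EOpp a => atoms_ok N a
  end.

Lemma atoms_ok_below N e : atoms_ok N e = true -> atoms_below N (vnf e).
Proof.
  induction e; simpl; intros H c i Hi.
  - destruct Hi as [Hi|[]]. inversion Hi; subst. now apply Nat.ltb_lt.
  - destruct Hi.
  - apply andb_prop in H as [H1 H2].
    destruct (in_app_or _ _ _ Hi) as [Hi'|Hi']; [exact (IHe1 H1 c i Hi')|exact (IHe2 H2 c i Hi')].
  - apply in_map_iff in Hi. destruct Hi as [[c' i'] [E Hi]]. inversion E; subst. exact (IHe H _ _ Hi).
  - apply in_map_iff in Hi. destruct Hi as [[c' i'] [E Hi]]. inversion E; subst. exact (IHe H _ _ Hi).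
Qed.

Fixpoint all_below (N : nat) (P : nat -> Prop) : Prop :=
  match N with O => True | S N' => all_below N' P /\ P N' end.

Lemma all_below_spec N P : all_below N P -> forall n, (n < N)%nat -> P n.
Proof.
  induction N; simpl; intros H n Hn; [lia|]. destruct H as [H HN].
  destruct (Nat.eq_dec n N) as [->|ne]; auto. apply IHN; auto; lia.
Qed.

Lemma veval_eq env e1 e2 :
  atoms_ok (length env) e1 = true -> atoms_ok (length env) e2 = true ->
  all_below (length env) (fun n => coef (vnf e1) n = coef (vnf e2) n) ->
  veval env e1 = veval env e2.
Proof.
  intros H1 H2 H. rewrite !vnf_correct.
  rewrite !(nf_eval_csum env (length env)) by now apply atoms_ok_below.
  apply csum_ext, all_below_spec, H.
Qed.

End VectorAlgebra.

Ltac vmem t l := lazymatch l with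
  | nil => constr:(false)
  | t :: _ => constr:(true)
  | _ :: ?l' => vmem t l' end.

Ltac vatoms t env := lazymatch t with
  | vadd _ ?a ?b => let env1 := vatoms a env in vatoms b env1
  | vscale _ _ ?a => vatoms a env
  | vopp _ ?a => vatoms a env
  | vzero _ => env
  | _ => lazymatch vmem t env with true => env | false => constr:(t :: env) end
  end.

Ltac vidx t l := lazymatch l with
  | t :: _ => constr:(O)
  | _ :: ?l' => let n := vidx t l' in constr:(S n) end.

Ltac vreify t env := lazymatch t with
  | vadd _ ?a ?b => let ra := vreify a env in let rb := vreify b env in constr:(EAdd ra rb)
  | vscale _ ?r ?a => let ra := vreify a env in constr:(EScale r ra)
  | vopp _ ?a => let ra := vreify a env in constr:(EOpp ra)
  | vzero _ => constr:(EZero)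
  | _ => let n := vidx t env in constr:(EAtom n)
  end.

(* [vring] proves identities in a real vector space, leaving the coefficient
   comparisons that [ring] cannot close (e.g. those needing [field]). *)
Ltac vring :=
  unfold vsub;
  lazymatch goal with
  | |- @eq (carrier ?X) ?a ?b =>
    let env0 := vatoms a (@nil (carrier X)) in
    let env := vatoms b env0 in
    let ea := vreify a env in
    let eb := vreify b env in
    change (veval X env ea = veval X env eb);
    apply veval_eq; [reflexivity | reflexivity |
      cbn [all_below coef vnf length app map fst snd Nat.eqb]; repeat split; try ring]
  end.

Section PartialMaps.
Variables (A B : Type) (b0 : B).

Record pmap := { pdom : A -> Prop; pval : A -> B }.

Definition extends (p q : pmap) : Prop :=
  (forall a, pdom p a -> pdom q a) /\ (forall a, pdom p a -> pval q a = pval p a).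

Lemma extends_refl p : extends p p.
Proof. split; auto. Qed.

Lemma extends_trans p q r : extends p q -> extends q r -> extends p r.
Proof.
  intros [Dpq Vpq] [Dqr Vqr]; split; auto. intros a Ha. rewrite Vqr, Vpq; auto.
Qed.

Definition is_chain (C : pmap -> Prop) : Prop :=
  forall p q, C p -> C q -> extends p q \/ extends q p.

Definition glue (C : pmap -> Prop) : pmap :=
  {| pdom := fun a => exists p, C p /\ pdom p a;
     pval := fun a => epsilon (inhabits b0) (fun b => exists p, C p /\ pdom p a /\ pval p a = b) |}.

Lemma glue_val C p a : is_chain C -> C p -> pdom p a -> pval (glue C) a = pval p a.
Proof.
  intros HC Cp Ha. simpl.
  destruct (epsilon_spec (inhabits b0) (fun b => exists p, C p /\ pdom p a /\ pval p a = b)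
              (ex_intro _ (pval p a) (ex_intro _ p (conj Cp (conj Ha eq_refl)))))
    as [q [Cq [Hqa <-]]].
  destruct (HC p q Cp Cq) as [[_ E]|[_ E]]; [apply E, Ha|symmetry; apply E, Hqa].
Qed.

Lemma glue_extends C p : is_chain C -> C p -> extends p (glue C).
Proof. intros HC Cp. split; [intros a Ha; exists p; auto|]. intros; apply glue_val; auto. Qed.

Lemma glue_common C a a' : is_chain C -> pdom (glue C) a -> pdom (glue C) a' ->
  exists p, C p /\ pdom p a /\ pdom p a'.
Proof.
  intros HC [p [Cp Ha]] [q [Cq Ha']].
  destruct (HC p q Cp Cq) as [[D _]|[D _]]; [exists q|exists p]; auto.
Qed.

Lemma zorn_pmap (ok : pmap -> Prop) (p0 : pmap) : ok p0 ->
  (forall C, is_chain C -> (forall p, C p -> ok p) -> (exists p, C p) -> ok (glue C)) ->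
  exists m, ok m /\ extends p0 m /\
    forall q, ok q -> extends m q -> forall a, pdom q a -> pdom m a.
Proof.
  intros ok0 okC.
  set (T := {p | ok p /\ extends p0 p}).
  set (t0 := exist _ p0 (conj ok0 (extends_refl p0)) : T).
  destruct (zorn_preorder T t0 (fun s t => extends (proj1_sig s) (proj1_sig t))) as [[m [okm Em]] Hm].
  - intro; apply extends_refl.
  - intros r s t; apply extends_trans.
  - intros C HC. set (C' := fun p => exists t : T, C t /\ proj1_sig t = p).
    assert (chainC' : is_chain C').
    { intros p q [s [Cs <-]] [t [Ct <-]]. auto. }
    destruct (classic (exists t, C t)) as [[t1 Ct1]|Hempty].
    + assert (okg : ok (glue C') /\ extends p0 (glue C')).
      { split.
        - apply okC; auto.
          + intros p [t [_ <-]]. apply (proj2_sig t).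
          + exists (proj1_sig t1), t1; auto.
        - apply extends_trans with (proj1_sig t1); [apply (proj2_sig t1)|].
          apply glue_extends; auto. exists t1; auto. }
      exists (exist (fun p => ok p /\ extends p0 p) (glue C') okg). intros s Cs. apply glue_extends; auto. exists s; auto.
    + exists t0. intros s Cs. exfalso; eauto.
  - exists m. split; [|split]; auto. intros q okq Emq a Ha.
    apply (proj1 (Hm (exist _ q (conj okq (extends_trans _ _ _ Em Emq))) Emq)); auto.
Qed.

End PartialMaps.

Arguments pdom {A B}.
Arguments pval {A B}.
Arguments Build_pmap {A B}.
Arguments extends {A B}.
Arguments is_chain {A B}.
Arguments glue {A B}.
Arguments glue_val {A B}.
Arguments glue_common {A B}.
Arguments zorn_pmap {A B}.

Definition is_subspace {X : BanachSpace} (D : X -> Prop) : Prop :=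
  D (vzero X) /\ (forall x y, D x -> D y -> D (x +v y)) /\ (forall a x, D x -> D (a *v x)).

Definition linear_on {X : BanachSpace} (D : X -> Prop) (h : X -> R) : Prop :=
  (forall x y, D x -> D y -> h (x +v y) = h x + h y) /\ (forall a x, D x -> h (a *v x) = a * h x).

Definition adjoin {X : BanachSpace} (D : X -> Prop) (y : X) : X -> Prop :=
  fun w => exists z t, D z /\ w = z +v t *v y.

Section Adjoin.
Variables (X : BanachSpace) (D : X -> Prop) (y : X).
Hypothesis D_subspace : is_subspace D.

Lemma adjoin_subspace : is_subspace (adjoin D y).
Proof.
  destruct D_subspace as [D0 [Dadd Dscale]]. split; [|split].
  - exists (vzero X), 0. split; auto. vring.
  - intros w1 w2 [z1 [t1 [Hz1 ->]]] [z2 [t2 [Hz2 ->]]].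
    exists (z1 +v z2), (t1 + t2). split; auto. vring.
  - intros a w [z [t [Hz ->]]]. exists (a *v z), (a * t). split; auto. vring.
Qed.

Lemma adjoin_incl z : D z -> adjoin D y z.
Proof. exists z, 0. split; auto. vring. Qed.

Lemma adjoin_new : adjoin D y y.
Proof. exists (vzero X), 1. split; [apply D_subspace|vring]. Qed.

Hypothesis y_new : ~ D y.

Lemma adjoin_unique z z' t t' : D z -> D z' -> z +v t *v y = z' +v t' *v y -> t = t' /\ z = z'.
Proof.
  intros Hz Hz' H. destruct D_subspace as [_ [Dadd Dscale]].
  assert (E : z' = z +v t *v y +v (-t') *v y).
  { transitivity (z' +v t' *v y +v (-t') *v y); [vring|]. rewrite <- H; reflexivity. }
  destruct (Req_dec t t') as [<-|ne].
  - split; auto. rewrite E. vring.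
  - exfalso. apply y_new.
    replace y with ((1 / (t - t')) *v (z' +v (-1) *v z)) by (rewrite E; vring; field; lra).
    apply Dscale, Dadd, Dscale; auto.
Qed.

Lemma adjoin_extension (h : X -> R) (c : R) : linear_on D h ->
  exists h', linear_on (adjoin D y) h' /\ forall z t, D z -> h' (z +v t *v y) = h z + t * c.
Proof.
  intros [Hadd Hscale]. destruct D_subspace as [_ [Dadd Dscale]].
  set (h' := fun w => epsilon (inhabits 0)
                        (fun v => exists z t, D z /\ w = z +v t *v y /\ v = h z + t * c)).
  assert (Hh' : forall z t, D z -> h' (z +v t *v y) = h z + t * c).
  { intros z t Hz. unfold h'.
    destruct (epsilon_spec (inhabits 0)
                (fun v => exists z' t', D z' /\ z +v t *v y = z' +v t' *v y /\ v = h z' + t' * c))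
      as [z' [t' [Hz' [E ->]]]]; [exists (h z + t * c), z, t; auto|].
    destruct (adjoin_unique z z' t t' Hz Hz' E) as [-> ->]. reflexivity. }
  exists h'. split; [split|exact Hh'].
  - intros w1 w2 [z1 [t1 [Hz1 ->]]] [z2 [t2 [Hz2 ->]]].
    replace (z1 +v t1 *v y +v (z2 +v t2 *v y)) with ((z1 +v z2) +v (t1 + t2) *v y) by vring.
    rewrite !Hh', Hadd; auto. ring.
  - intros a w [z [t [Hz ->]]].
    replace (a *v (z +v t *v y)) with ((a *v z) +v (a * t) *v y) by vring.
    rewrite !Hh', Hscale; auto. ring.
Qed.

End Adjoin.

Section HahnBanach.
Variables (X : BanachSpace) (P : X -> R).
Hypothesis P_subadditive : forall x y, P (x +v y) <= P x + P y.
Hypothesis P_homogeneous : forall a x, 0 <= a -> P (a *v x) = a * P x.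

Lemma extension_constant (D : X -> Prop) (h : X -> R) (y : X) :
  is_subspace D -> linear_on D h -> (forall x, D x -> h x <= P x) ->
  exists c, forall z, D z -> h z - P (z +v (-1) *v y) <= c /\ c <= P (z +v y) - h z.
Proof.
  intros [D0 [Dadd _]] [Hadd _] Hdom.
  assert (Key : forall z z', D z -> D z' -> h z - P (z +v (-1) *v y) <= P (z' +v y) - h z').
  { intros z z' Hz Hz'.
    assert (h (z +v z') <= P (z +v (-1) *v y) + P (z' +v y)); [|rewrite Hadd in H; auto; lra].
    eapply Rle_trans; [apply Hdom; auto|].
    replace (z +v z') with ((z +v (-1) *v y) +v (z' +v y)) by vring. apply P_subadditive. }
  set (E := fun v => exists z, D z /\ v = h z - P (z +v (-1) *v y)).
  destruct (completeness E) as [c [Hub Hlub]].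
  - exists (P (vzero X +v y) - h (vzero X)). intros v [z [Hz ->]]. apply Key; auto.
  - exists (h (vzero X) - P (vzero X +v (-1) *v y)), (vzero X); auto.
  - exists c. intros z Hz. split.
    + apply Hub. exists z; auto.
    + apply Hlub. intros v [z' [Hz' ->]]. apply Key; auto.
Qed.

Lemma extension_step (D : X -> Prop) (h : X -> R) (y : X) :
  is_subspace D -> linear_on D h -> (forall x, D x -> h x <= P x) -> ~ D y ->
  exists h', linear_on (adjoin D y) h' /\ (forall x, adjoin D y x -> h' x <= P x) /\
    (forall x, D x -> h' x = h x).
Proof.
  intros HD Hh Hdom Hy.
  destruct (extension_constant D h y HD Hh Hdom) as [c Hc].
  destruct (adjoin_extension X D y HD Hy h c Hh) as [h' [Hh' Hval]].
  destruct HD as [_ [_ Dscale]]. destruct Hh as [_ Hscale].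
  exists h'. split; [exact Hh'|split].
  - intros w [z [t [Hz ->]]]. rewrite Hval by auto.
    destruct (Rtotal_order t 0) as [Hneg|[->|Hpos]].
    + (* [c >= h(z/s) - P(z/s - y)] with [s = -t], rescaled by [s] *)
      set (s := - t). assert (Hs : 0 < s) by (unfold s; lra).
      destruct (Hc ((/ s) *v z) (Dscale _ _ Hz)) as [Hlow _]. rewrite Hscale in Hlow by auto.
      replace (z +v t *v y) with (s *v ((/ s) *v z +v (-1) *v y)) by (vring; unfold s; field; lra).
      rewrite P_homogeneous by lra.
      apply (Rmult_le_compat_l s) in Hlow; [|lra].
      replace (s * (/ s * h z - P (/ s *v z +v -1 *v y))) with (h z - s * P (/ s *v z +v -1 *v y))
        in Hlow by (field; lra).
      replace t with (- s) by (unfold s; ring). lra.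
    + replace (z +v 0 *v y) with z by vring. rewrite Rmult_0_l, Rplus_0_r. auto.
    + (* [c <= P(z/t + y) - h(z/t)], rescaled by [t] *)
      destruct (Hc ((/ t) *v z) (Dscale _ _ Hz)) as [_ Hup]. rewrite Hscale in Hup by auto.
      replace (z +v t *v y) with (t *v ((/ t) *v z +v y)) by (vring; field; lra).
      rewrite P_homogeneous by lra.
      apply (Rmult_le_compat_l t) in Hup; [|lra].
      replace (t * (P (/ t *v z +v y) - / t * h z)) with (t * P (/ t *v z +v y) - h z)
        in Hup by (field; lra).
      lra.
  - intros x Hx. replace x with (x +v 0 *v y) at 1 by vring. rewrite Hval by auto. ring.
Qed.

Theorem hahn_banach (M : X -> Prop) (g : X -> R) :
  is_subspace M -> linear_on M g -> (forall x, M x -> g x <= P x) ->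
  exists f : X -> R, linear_on (fun _ => True) f /\ (forall x, M x -> f x = g x) /\
    (forall x, f x <= P x).
Proof.
  intros HM Hg Hdom.
  set (ok := fun p : pmap X R =>
    is_subspace (pdom p) /\ linear_on (pdom p) (pval p) /\ (forall x, pdom p x -> pval p x <= P x)).
  destruct (zorn_pmap 0 ok (Build_pmap M g)) as [[D h] [[HD [Hh Hhdom]] [[MD Ehg] Hmax]]].
  - split; auto.
  - intros C HC okC [p0 Cp0]. split; [split; [|split]|split; [split|]].
    + exists p0. split; auto. apply (okC p0 Cp0).
    + intros x x' Hx Hx'. destruct (glue_common 0 C x x' HC Hx Hx') as [p [Cp [Hpx Hpx']]].
      exists p. split; auto. apply (okC p Cp); auto.
    + intros a x [p [Cp Hpx]]. exists p. split; auto. apply (okC p Cp); auto.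
    + intros x x' Hx Hx'. destruct (glue_common 0 C x x' HC Hx Hx') as [p [Cp [Hpx Hpx']]].
      destruct (okC p Cp) as [[_ [Padd _]] [[Vadd _] _]].
      rewrite !(glue_val 0 C p) by auto. auto.
    + intros a x [p [Cp Hpx]]. destruct (okC p Cp) as [[_ [_ Pscale]] [[_ Vscale] _]].
      rewrite !(glue_val 0 C p) by auto. auto.
    + intros x [p [Cp Hpx]]. rewrite (glue_val 0 C p) by auto. apply (okC p Cp); auto.
  - simpl in *. exists h.
    assert (Dfull : forall y, D y).
    { intro y. apply NNPP; intro Hy.
      destruct (extension_step D h y HD Hh Hhdom Hy) as [h' [Hh' [Hdom' Eh']]].
      apply Hy, (Hmax (Build_pmap (adjoin D y) h')); simpl.
      - split; [apply adjoin_subspace; auto|auto].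
      - split; [intros; apply adjoin_incl; auto|auto].
      - apply adjoin_new, HD. }
    destruct Hh as [Hadd Hscale]. split; [split; auto|split; auto].
Qed.

End HahnBanach.

(* A point at distance at least [d > 0] from a subspace [D] is separated from it
   by a functional of norm at most [1/d] (Hahn-Banach with [P x = |x|/d]). *)
Lemma separating_functional (X : BanachSpace) (D : X -> Prop) (y : X) (d : R) :
  is_subspace D -> 0 < d -> (forall z, D z -> d <= vnorm X (y +v (-1) *v z)) ->
  exists f : X -> R, linear_on (fun _ => True) f /\ (forall z, D z -> f z = 0) /\ f y = 1 /\
    (forall x, Rabs (f x) <= / d * vnorm X x).
Proof.
  intros HD Hd Hdist.
  assert (Hy : ~ D y).
  { intro Hy. specialize (Hdist y Hy).
    replace (y +v (-1) *v y) with (vzero X) in Hdist by vring. rewrite vnorm_zero in Hdist. lra. }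
  assert (Hid : 0 < / d) by (apply Rinv_0_lt_compat; auto).
  set (P := fun x => / d * vnorm X x).
  assert (P_sub : forall x x', P (x +v x') <= P x + P x').
  { intros x x'; unfold P. rewrite <- Rmult_plus_distr_l.
    apply Rmult_le_compat_l; [lra|apply vnorm_triangle]. }
  assert (P_hom : forall a x, 0 <= a -> P (a *v x) = a * P x).
  { intros a x Ha; unfold P. rewrite vnorm_scale, Rabs_pos_eq; auto. ring. }
  (* the coordinate of [y] on [D + R y] *)
  destruct (adjoin_extension X D y HD Hy (fun _ => 0) 1) as [g [Hg Hgval]].
  { split; intros; ring. }
  assert (Hgdom : forall x, adjoin D y x -> g x <= P x).
  { intros w [z [t [Hz ->]]]. rewrite Hgval by auto. unfold P.
    destruct (Req_dec t 0) as [->|Ht].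
    - assert (0 <= vnorm X (z +v 0 *v y)) by apply vnorm_nonneg. nra.
    - replace (z +v t *v y) with (t *v (y +v (-1) *v ((- / t) *v z))) by (vring; field; auto).
      rewrite vnorm_scale.
      assert (d <= vnorm X (y +v -1 *v (- / t *v z))) by (apply Hdist, HD; auto).
      assert (t <= Rabs t) by apply Rle_abs.
      apply Rle_trans with (/ d * (Rabs t * d)).
      + replace (/ d * (Rabs t * d)) with (Rabs t) by (field; lra). lra.
      + apply Rmult_le_compat_l; [lra|]. apply Rmult_le_compat_l; [apply Rabs_pos|auto]. }
  destruct (hahn_banach X P P_sub P_hom (adjoin D y) g (adjoin_subspace X D y HD) Hg Hgdom)
    as [f [[Fadd Fscale] [Efg Fdom]]].
  exists f. split; [split; auto|split; [|split]].
  - intros z Hz. rewrite Efg by (apply adjoin_incl; auto).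
    replace z with (z +v 0 *v y) by vring. rewrite Hgval; auto. ring.
  - rewrite Efg by (apply adjoin_new, HD).
    replace y with (vzero X +v 1 *v y) by vring. rewrite Hgval by apply HD. ring.
  - intro x. apply Rabs_le. split.
    + assert (f ((-1) *v x) <= P ((-1) *v x)) by apply Fdom.
      rewrite Fscale in H by auto. unfold P in H. rewrite vnorm_opp in H. unfold P. lra.
    + apply Fdom.
Qed.

Definition rsum (l : list nat) (g : nat -> R) : R := fold_right (fun k acc => g k + acc) 0 l.

Lemma rsum_ext l g1 g2 : (forall k, In k l -> g1 k = g2 k) -> rsum l g1 = rsum l g2.
Proof.
  induction l as [|k l IH]; intro H; simpl; [reflexivity|].
  rewrite H, IH; [reflexivity| |simpl; auto]. intros; apply H; simpl; auto.
Qed.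

Lemma rsum_zero l g : (forall k, In k l -> g k = 0) -> rsum l g = 0.
Proof.
  intro H. rewrite (rsum_ext l g (fun _ => 0)) by auto.
  clear H. induction l; simpl; lra.
Qed.

Lemma rsum_delta l g j : NoDup l -> In j l -> (forall k, In k l -> k <> j -> g k = 0) ->
  rsum l g = g j.
Proof.
  induction l as [|k l IH]; intros Hl Hj H; [destruct Hj|simpl].
  inversion Hl as [|? ? Hk Hl']; subst.
  destruct (Nat.eq_dec k j) as [->|ne].
  - rewrite rsum_zero; [ring|]. intros k' Hk'. apply H; [simpl; auto|]. intros ->; auto.
  - rewrite H, IH; simpl; auto; [ring| |]. destruct Hj; [contradiction|auto].
    intros; apply H; simpl; auto.
Qed.

Lemma rsum_add l g1 g2 : rsum l (fun k => g1 k + g2 k) = rsum l g1 + rsum l g2.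
Proof. induction l; simpl; [ring|]. rewrite IHl. ring. Qed.

Lemma rsum_scale l a g : rsum l (fun k => a * g k) = a * rsum l g.
Proof. induction l; simpl; [ring|]. rewrite IHl. ring. Qed.

Lemma rsum_bounded (X : BanachSpace) l (u : nat -> X -> R) :
  (forall k, In k l -> exists C, forall x, Rabs (u k x) <= C * vnorm X x) ->
  exists C, forall x, Rabs (rsum l (fun k => u k x)) <= C * vnorm X x.
Proof.
  induction l as [|k l IH]; intros H.
  - exists 0. intros x. simpl. rewrite Rabs_R0. lra.
  - destruct (H k) as [C1 H1]; [simpl; auto|].
    destruct IH as [C2 H2]; [intros; apply H; simpl; auto|].
    exists (C1 + C2). intro x. simpl. eapply Rle_trans; [apply Rabs_triang|].
    specialize (H1 x); specialize (H2 x). lra.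
Qed.

Lemma linear_lincomb (X : BanachSpace) (f : X -> R) (a : nat -> R) (v : nat -> X) l :
  linear_on (fun _ => True) f ->
  f (lincomb (map (fun k => (a k, v k)) l)) = rsum l (fun k => a k * f (v k)).
Proof.
  intros [Fadd Fscale]. induction l as [|k l IH]; simpl.
  - replace (vzero X) with (0 *v vzero X) by vring. rewrite Fscale; auto. ring.
  - rewrite Fadd, Fscale, IH; auto.
Qed.

Lemma combine_map {A B C : Type} (a : C -> A) (v : C -> B) (l : list C) :
  combine (map a l) (map v l) = map (fun k => (a k, v k)) l.
Proof. induction l; simpl; [|rewrite IHl]; reflexivity. Qed.

Lemma dual_linear (X : BanachSpace) (f : X -> R) : is_dual_elem f -> linear_on (fun _ => True) f.
Proof. intros [Fadd [Fscale _]]; split; auto. Qed.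

(* In an infinite dimensional space, every finite biorthogonal family extends by
   one more pair; hence there are countably infinite biorthogonal systems. *)
Section CountableSystem.
Variable X : BanachSpace.
Hypothesis X_infinite : infinite_dimensional X.

Definition biorth_upto (n : nat) (F : nat -> X * (X -> R)) : Prop :=
  (forall j, (j < n)%nat -> is_dual_elem (snd (F j)) /\ snd (F j) (fst (F j)) = 1) /\
  (forall j k, (j < n)%nat -> (k < n)%nat -> j <> k -> snd (F j) (fst (F k)) = 0).

Definition fresh_pair (n : nat) (F : nat -> X * (X -> R)) (q : X * (X -> R)) : Prop :=
  is_dual_elem (snd q) /\ snd q (fst q) = 1 /\
  forall j, (j < n)%nat -> snd q (fst (F j)) = 0 /\ snd (F j) (fst q) = 0.

(* Some nonzero vector is annihilated by the functionals of the family: remove from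
   a vector outside the span of the [fst (F j)] its components along them. *)
Lemma common_kernel_nonzero n F : biorth_upto n F ->
  exists y, y <> vzero X /\ forall j, (j < n)%nat -> snd (F j) y = 0.
Proof.
  intros [Hdual Hcross]. set (l := seq 0 n).
  destruct (X_infinite (map (fun k => fst (F k)) l)) as [y Hy].
  set (P := lincomb (map (fun k => (snd (F k) y, fst (F k))) l)).
  exists (y +v (-1) *v P). split.
  - intro E. apply Hy. exists (map (fun k => snd (F k) y) l).
    rewrite !length_map, combine_map. split; [reflexivity|].
    transitivity ((y +v (-1) *v P) +v P); [vring|]. rewrite E. fold P. vring.
  - intros j Hj. destruct (Hdual j Hj) as [Fj Ejj].
    destruct (dual_linear X _ Fj) as [Fadd Fscale].
    rewrite Fadd, Fscale by auto. unfold P. rewrite linear_lincomb by (apply dual_linear; auto).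
    rewrite (rsum_delta _ _ j), Ejj; [ring|apply seq_NoDup|apply in_seq; lia|].
    intros k Hk Hne. apply in_seq in Hk. rewrite Hcross by lia. ring.
Qed.

(* Correcting a functional separating that vector by the family's functionals
   yields the new pair. *)
Lemma biorth_extend n F : biorth_upto n F -> exists q, fresh_pair n F q.
Proof.
  intros HF. destruct (common_kernel_nonzero n F HF) as [y [Hy0 Hky]].
  destruct HF as [Hdual Hcross]. set (l := seq 0 n).
  assert (Hn : 0 < vnorm X y).
  { destruct (vnorm_nonneg X y) as [|E]; auto. exfalso; apply Hy0, vnorm_eq0; auto. }
  destruct (separating_functional X (fun z => z = vzero X) y (vnorm X y))
    as [h [[Hadd Hscale] [_ [Hhy Hbound]]]]; auto.
  { split; [|split]; auto; [intros a b -> ->|intros a x ->]; vring. }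
  { intros z ->. right. f_equal. vring. }
  assert (Hlin : forall k, (k < n)%nat -> linear_on (fun _ => True) (snd (F k))).
  { intros k Hk. apply dual_linear, Hdual, Hk. }
  exists (y, fun x => h x - rsum l (fun k => h (fst (F k)) * snd (F k) x)).
  unfold fresh_pair, is_dual_elem; cbn [fst snd].
  split; [split; [|split]|split].
  - intros a b. rewrite Hadd by auto.
    rewrite (rsum_ext l _ (fun k => h (fst (F k)) * snd (F k) a + h (fst (F k)) * snd (F k) b)),
      rsum_add; [ring|].
    intros k Hk. apply in_seq in Hk. rewrite (proj1 (Hlin k ltac:(lia))) by auto. ring.
  - intros c a. rewrite Hscale by auto.
    rewrite (rsum_ext l _ (fun k => c * (h (fst (F k)) * snd (F k) a))), rsum_scale; [ring|].
    intros k Hk. apply in_seq in Hk. rewrite (proj2 (Hlin k ltac:(lia))) by auto. ring.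
  - destruct (rsum_bounded X l (fun k x => h (fst (F k)) * snd (F k) x)) as [C HC].
    { intros k Hk. apply in_seq in Hk. destruct (Hdual k ltac:(lia)) as [[_ [_ [Ck HCk]]] _].
      exists (Rabs (h (fst (F k))) * Ck). intro x. rewrite Rabs_mult, Rmult_assoc.
      apply Rmult_le_compat_l; [apply Rabs_pos|auto]. }
    exists (/ vnorm X y + C). intro x.
    eapply Rle_trans; [unfold Rminus; apply Rabs_triang|]. rewrite Rabs_Ropp.
    specialize (Hbound x); specialize (HC x). lra.
  - rewrite Hhy, rsum_zero; [ring|]. intros k Hk. apply in_seq in Hk. rewrite Hky by lia. ring.
  - intros j Hj. split; [|apply Hky; auto].
    rewrite (rsum_delta _ _ j); [|apply seq_NoDup|apply in_seq; lia|].
    + rewrite (proj2 (Hdual j Hj)). ring.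
    + intros k Hk Hne. apply in_seq in Hk. rewrite Hcross by lia. ring.
Qed.

Definition next_pair (n : nat) (F : nat -> X * (X -> R)) : X * (X -> R) :=
  epsilon (inhabits (vzero X, fun _ => 0)) (fresh_pair n F).

(* [family n k], [k < n], are the first [n] pairs of the sequence. *)
Fixpoint family (n : nat) : nat -> X * (X -> R) :=
  match n with
  | O => fun _ => (vzero X, fun _ => 0)
  | S n' => fun k => if Nat.eqb k n' then next_pair n' (family n') else family n' k
  end.

Lemma family_biorth n : biorth_upto n (family n).
Proof.
  induction n as [|n IH]; [split; intros; lia|].
  destruct (epsilon_spec (inhabits (vzero X, fun _ => 0)) (fresh_pair n (family n))
              (biorth_extend n _ IH)) as [Hdual [Hone Hcross]].
  fold (next_pair n (family n)) in Hdual, Hone, Hcross.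
  destruct IH as [B1 B2]. split; simpl.
  - intros j Hj. destruct (Nat.eqb_spec j n); auto. apply B1; lia.
  - intros j k Hj Hk Hjk.
    destruct (Nat.eqb_spec j n) as [->|n1]; destruct (Nat.eqb_spec k n) as [->|n2];
      [lia|apply Hcross; lia|apply Hcross; lia|apply B2; lia].
Qed.

Lemma family_stable n m k : (k < n <= m)%nat -> family m k = family n k.
Proof.
  intros [Hk Hnm]. induction m as [|m IH]; [replace n with O by lia; reflexivity|].
  destruct (Nat.eq_dec n (S m)) as [->|ne]; [reflexivity|].
  simpl. destruct (Nat.eqb_spec k m); [lia|apply IH; lia].
Qed.

Lemma biorthogonal_sequence :
  biorthogonal (fun k => fst (family (S k) k)) (fun k => snd (family (S k) k)).
Proof.
  split; [|split]; [intro i; apply (family_biorth (S i)); lia..|].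
  intros i j Hij. set (m := S (Nat.max i j)).
  rewrite <- (family_stable (S i) m i), <- (family_stable (S j) m j) by lia.
  apply (family_biorth m); lia.
Qed.

End CountableSystem.

Lemma card_nat_le_biort_bound (X : BanachSpace) (K : Type) :
  infinite_dimensional X -> biort_bound X K -> card_le nat K.
Proof. intros Hinf HK. exact (HK _ _ _ (biorthogonal_sequence X Hinf)). Qed.

Lemma le_inv_succ_zero (a : R) : 0 <= a -> (forall n : nat, a <= 2 / (INR n + 1)) -> a = 0.
Proof.
  intros Ha H. destruct Ha as [Ha|]; auto. exfalso.
  destruct (archimed_cor1 (a / 2)) as [N [HN HN0]]; [lra|].
  specialize (H N). assert (0 < INR N) by (apply lt_0_INR; auto).
  assert (2 / (INR N + 1) < 2 / INR N).
  { unfold Rdiv. apply Rmult_lt_compat_l; [lra|]. apply Rinv_lt_contravar; [nra|lra]. }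
  assert (2 / INR N = 2 * / INR N) by (unfold Rdiv; ring). lra.
Qed.

Section MaximalSystem.
Variable X : BanachSpace.

Definition biorth_set (S : X * (X -> R) -> Prop) : Prop :=
  (forall q, S q -> is_dual_elem (snd q) /\ snd q (fst q) = 1) /\
  (forall q q', S q -> S q' -> q <> q' -> snd q (fst q') = 0).

Definition maximal_biorth_set (S : X * (X -> R) -> Prop) : Prop :=
  biorth_set S /\ forall S', biorth_set S' -> (forall q, S q -> S' q) -> forall q, S' q -> S q.

Lemma maximal_biorth_set_exists : exists S, maximal_biorth_set S.
Proof.
  set (T := {S | biorth_set S}).
  assert (b0 : biorth_set (fun _ => False)) by (split; intros; contradiction).
  destruct (zorn_preorder T (exist _ _ b0) (fun a b => forall q, proj1_sig a q -> proj1_sig b q))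
    as [[S bS] HS]; auto.
  - intros C HC. set (U := fun q => exists a, C a /\ proj1_sig a q).
    assert (bU : biorth_set U).
    { split.
      - intros q [a [_ Hq]]. apply (proj1 (proj2_sig a)); auto.
      - intros q q' [a [Ca Hq]] [b [Cb Hq']] Hne.
        destruct (HC a b Ca Cb); [apply (proj2 (proj2_sig b))|apply (proj2 (proj2_sig a))]; auto. }
    exists (exist _ U bU). intros s Cs q Hq. exists s; auto.
  - exists S. split; auto. intros S' bS' Hsub q Hq. exact (HS (exist _ S' bS') Hsub q Hq).
Qed.

Lemma lincomb_app (l1 l2 : list (R * X)) : lincomb (l1 ++ l2) = lincomb l1 +v lincomb l2.
Proof. induction l1 as [|[c v] t IH]; simpl; [|rewrite IH]; vring. Qed.

Lemma lincomb_scale (a : R) (l : list (R * X)) :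
  lincomb (map (fun p => (a * fst p, snd p)) l) = a *v lincomb l.
Proof. induction l as [|[c v] t IH]; simpl; [|rewrite IH, <- vscale_assoc]; vring. Qed.

Variable S : X * (X -> R) -> Prop.
Hypothesis S_maximal : maximal_biorth_set S.

Definition index : Type := {q | S q}.
Definition xi (i : index) : X := fst (proj1_sig i).
Definition fi (i : index) : X -> R := snd (proj1_sig i).

Lemma index_biorthogonal : biorthogonal xi fi.
Proof.
  destruct S_maximal as [[Hdual Hcross] _]. split; [|split].
  - intro i. apply Hdual, (proj2_sig i).
  - intro i. apply Hdual, (proj2_sig i).
  - intros i j Hij. apply Hcross; [apply (proj2_sig i)|apply (proj2_sig j)|].
    intro E. apply Hij. destruct i, j; simpl in E. subst. f_equal. apply proof_irrelevance.
Qed.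

Definition span_comb (l : list (R * index)) : X := lincomb (map (fun p => (fst p, xi (snd p))) l).

Lemma span_subspace : is_subspace (fun z => exists l, z = span_comb l).
Proof.
  split; [|split].
  - exists nil; reflexivity.
  - intros a b [l1 ->] [l2 ->]. exists (l1 ++ l2). unfold span_comb. now rewrite map_app, lincomb_app.
  - intros a b [l ->]. exists (map (fun p => (a * fst p, snd p)) l). unfold span_comb.
    now rewrite <- lincomb_scale, !map_map.
Qed.

(* Maximality: a vector annihilated by every [fi] lies in the closed span of the
   [xi]; otherwise a functional separating it from that span would enlarge the system. *)
Lemma kernel_in_closed_span (y : X) : (forall i, fi i y = 0) ->
  forall eps, 0 < eps -> exists l, vnorm X (y +v (-1) *v span_comb l) < eps.
Proof.
  intros Hy eps Heps. apply NNPP; intro Hfar.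
  destruct (separating_functional X _ y eps span_subspace Heps) as [f [[Fadd Fscale] [Fspan [Fy Fb]]]].
  { intros z [l ->]. apply Rnot_lt_le. intro H; apply Hfar; exists l; auto. }
  destruct S_maximal as [[Hdual Hcross] Hmax].
  assert (Hnew : biorth_set (fun q => S q \/ q = (y, f))).
  { split.
    - intros q [Hq| ->]; [apply Hdual; auto|]. simpl. split; auto.
      split; [|split]; auto. exists (/ eps); auto.
    - intros q q' [Hq| ->] [Hq'| ->] Hne; simpl.
      + apply Hcross; auto.
      + exact (Hy (exist _ q Hq)).
      + apply Fspan. exists ((1, exist _ q' Hq') :: nil). unfold span_comb, xi; simpl. vring.
      + contradiction. }
  assert (Hin : S (y, f)) by (apply (Hmax _ Hnew); auto).
  specialize (Hy (exist _ (y, f) Hin)). unfold fi in Hy; simpl in Hy. lra.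
Qed.

Definition approximant (y : X) (n : nat) : list (R * index) :=
  epsilon (inhabits nil) (fun l => vnorm X (y +v (-1) *v span_comb l) < / (INR n + 1)).

Lemma approximant_spec (y : X) (n : nat) : (forall i, fi i y = 0) ->
  vnorm X (y +v (-1) *v span_comb (approximant y n)) < / (INR n + 1).
Proof.
  intro Hy. apply (epsilon_spec (inhabits nil)
    (fun l => vnorm X (y +v (-1) *v span_comb l) < / (INR n + 1))).
  apply kernel_in_closed_span; auto. apply Rinv_0_lt_compat. pose proof (pos_INR n); lra.
Qed.

Lemma approximant_injective (y y' : X) : (forall i, fi i y = 0) -> (forall i, fi i y' = 0) ->
  approximant y = approximant y' -> y = y'.
Proof.
  intros Hy Hy' E.
  assert (Hclose : forall n, vnorm X (y +v (-1) *v y') <= 2 / (INR n + 1)).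
  { intro n. pose proof (approximant_spec y n Hy) as H1. pose proof (approximant_spec y' n Hy') as H2.
    rewrite <- E in H2. set (z := span_comb (approximant y n)) in *.
    replace (y +v (-1) *v y') with ((y +v (-1) *v z) +v (-1) *v (y' +v (-1) *v z)) by vring.
    eapply Rle_trans; [apply vnorm_triangle|]. rewrite vnorm_opp.
    replace (2 / (INR n + 1)) with (/ (INR n + 1) + / (INR n + 1)); [lra|].
    field. pose proof (pos_INR n); lra. }
  apply le_inv_succ_zero, vnorm_eq0 in Hclose; [|apply vnorm_nonneg].
  transitivity ((y +v (-1) *v y') +v y'); [vring|]. rewrite Hclose. vring.
Qed.

Definition coords (x : X) : index -> R := fun i => fi i x.

(* Some vector with prescribed coordinates, when there is one. *)
Definition coord_rep (t : index -> R) : X := epsilon (inhabits (vzero X)) (fun x => coords x = t).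

(* The encoding of [x]: its coordinates, and approximants of its component in
   the common kernel of the [fi]. *)
Definition encode (x : X) : (index -> R) * (nat -> list (R * index)) :=
  (coords x, approximant (x +v (-1) *v coord_rep (coords x))).

Lemma encode_injective (x x' : X) : encode x = encode x' -> x = x'.
Proof.
  intro E. injection E as Ec Ea. rewrite <- Ec in Ea.
  set (r := coord_rep (coords x)) in *.
  assert (Hr : coords r = coords x).
  { apply (epsilon_spec (inhabits (vzero X)) (fun z => coords z = coords x)). exists x; auto. }
  assert (Hker : forall z, coords z = coords x -> forall i, fi i (z +v (-1) *v r) = 0).
  { intros z Hz i. destruct (proj1 index_biorthogonal i) as [Fadd [Fscale _]].
    rewrite Fadd, Fscale. change (coords z i + -1 * coords r i = 0). rewrite Hz, Hr. ring. }
  apply approximant_injective in Ea; [|apply Hker; auto..].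
  transitivity ((x +v (-1) *v r) +v r); [vring|]. rewrite Ea. vring.
Qed.

End MaximalSystem.

Lemma card_le_refl A : card_le A A.
Proof. exists (fun a => a); auto. Qed.

Lemma card_le_trans A B C : card_le A B -> card_le B C -> card_le A C.
Proof. intros [f Hf] [g Hg]. exists (fun a => g (f a)); auto. Qed.

Lemma card_le_prod A A' B B' : card_le A A' -> card_le B B' -> card_le (A * B) (A' * B').
Proof.
  intros [f Hf] [g Hg]. exists (fun p => (f (fst p), g (snd p))).
  intros [a b] [a' b'] E. injection E as E1 E2. f_equal; auto.
Qed.

Lemma card_le_arrow C A B : card_le A B -> card_le (C -> A) (C -> B).
Proof.
  intros [f Hf]. exists (fun h c => f (h c)). intros h h' E.
  apply functional_extensionality; intro c. apply Hf. exact (equal_f E c).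
Qed.

(* [|A| <= |B|] implies [2^|A| <= 2^|B|]: extend by [false] off the image. *)
Lemma card_le_pow A B : card_le A B -> card_le (A -> bool) (B -> bool).
Proof.
  intros [f Hf].
  exists (fun h b => match excluded_middle_informative (exists a, f a = b) with
            | left H => h (proj1_sig (constructive_indefinite_description _ H))
            | right _ => false end).
  intros h h' E. apply functional_extensionality; intro a.
  pose proof (equal_f E (f a)) as Ea. simpl in Ea.
  destruct (excluded_middle_informative (exists a0, f a0 = f a)) as [H|H]; [|exfalso; eauto].
  destruct (constructive_indefinite_description _ H) as [a0 Ha0]. simpl in Ea.
  apply Hf in Ha0. subst; auto.
Qed.

Lemma card_le_pow_sum A B : card_le ((A -> bool) * (B -> bool)) ((A + B) -> bool).
Proof.
  exists (fun p e => match e with inl a => fst p a | inr b => snd p b end).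
  intros [h1 h2] [h1' h2'] E. f_equal; apply functional_extensionality; intro x.
  - exact (equal_f E (inl x)).
  - exact (equal_f E (inr x)).
Qed.

Lemma card_le_curry C A : card_le (C -> (A -> bool)) ((C * A) -> bool).
Proof.
  exists (fun h p => h (fst p) (snd p)). intros h h' E.
  apply functional_extensionality; intro c; apply functional_extensionality; intro a.
  exact (equal_f E (c, a)).
Qed.

(* [|A| <= 2^|A|], via singletons. *)
Lemma card_le_singletons A : card_le A (A -> bool).
Proof.
  exists (fun a b => if excluded_middle_informative (a = b) then true else false).
  intros a a' E. pose proof (equal_f E a') as E'. simpl in E'.
  destruct (excluded_middle_informative (a = a')); auto.
  destruct (excluded_middle_informative (a' = a')) as [_|n']; [discriminate|contradiction].
Qed.

Lemma card_le_list A : card_le (list A) (nat -> option A).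
Proof.
  exists (fun l n => nth_error l n). intros l l' E.
  assert (H : forall n, nth_error l n = nth_error l' n) by (intro n; exact (equal_f E n)).
  clear E. revert l' H; induction l as [|a t IH]; intros [|a' t'] H; auto.
  - specialize (H 0%nat); discriminate.
  - specialize (H 0%nat); discriminate.
  - pose proof (H 0%nat) as H0; simpl in H0; injection H0 as ->. f_equal. apply IH.
    intro n; exact (H (S n)).
Qed.

Lemma cantor_injective (p q : nat * nat) : Cantor.to_nat p = Cantor.to_nat q -> p = q.
Proof. intro E. rewrite <- (Cantor.cancel_of_to p), <- (Cantor.cancel_of_to q), E. reflexivity. Qed.

Lemma card_le_Z_nat : card_le (Z * nat) nat.
Proof.
  exists (fun p => Cantor.to_nat (Cantor.to_nat (Z.to_nat (fst p), Z.to_nat (- fst p)), snd p)).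
  intros [z n] [z' n'] E. cbn [fst snd] in E.
  apply cantor_injective in E.
  pose proof (cantor_injective _ _ (f_equal fst E)) as Ez. cbn [fst] in Ez.
  pose proof (f_equal fst Ez) as E1. pose proof (f_equal snd Ez) as E2.
  pose proof (f_equal snd E) as E3. cbn [fst snd] in E1, E2, E3. subst. f_equal. lia.
Qed.

Lemma fraction_between (r r' : R) : r < r' -> exists c : Z * nat, r < IZR (fst c) / INR (S (snd c)) < r'.
Proof.
  intro H. destruct (archimed_cor1 (r' - r)) as [N [HN HN0]]; [lra|].
  assert (HN1 : 0 < INR N) by (apply lt_0_INR; auto).
  destruct (archimed (r * INR N)) as [A1 A2].
  exists (up (r * INR N), pred N). cbn [fst snd].
  replace (INR (S (pred N))) with (INR N) by (f_equal; lia).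
  assert (1 < (r' - r) * INR N).
  { apply (Rmult_lt_compat_r (INR N)) in HN; auto. rewrite Rinv_l in HN; lra. }
  replace (IZR (up (r * INR N)) / INR N) with (IZR (up (r * INR N)) * / INR N) by reflexivity.
  split; apply (Rmult_lt_reg_r (INR N)); auto; rewrite Rmult_assoc, Rinv_l; lra.
Qed.

Definition lower_cut (r : R) (c : Z * nat) : bool :=
  if Rlt_dec (IZR (fst c) / INR (S (snd c))) r then true else false.

Lemma lower_cut_injective (r r' : R) : lower_cut r = lower_cut r' -> r = r'.
Proof.
  assert (Hlt : forall a b, a < b -> lower_cut a <> lower_cut b).
  { intros a b Hab Eab. destruct (fraction_between a b Hab) as [c Hc].
    pose proof (equal_f Eab c) as Ec. unfold lower_cut in Ec.
    destruct (Rlt_dec _ a); destruct (Rlt_dec _ b); try discriminate; lra. }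
  intro E. destruct (Rtotal_order r r') as [H|[H|H]]; auto; exfalso.
  - exact (Hlt r r' H E).
  - exact (Hlt r' r H (eq_sym E)).
Qed.

Lemma card_le_R : card_le R (nat -> bool).
Proof.
  eapply card_le_trans; [|apply card_le_pow, card_le_Z_nat].
  exists lower_cut. exact lower_cut_injective.
Qed.

Section Absorption.
Variable K : Type.

Definition injective_seq_in (P : K -> Prop) (s : nat -> K) : Prop :=
  (forall n, P (s n)) /\ (forall m n, s m = s n -> m = n).

Fixpoint greedy (P : K -> Prop) (n : nat) : list K :=
  match n with
  | O => nil
  | S n' => match excluded_middle_informative (exists k, P k /\ ~ In k (greedy P n')) with
            | left H => proj1_sig (constructive_indefinite_description _ H) :: greedy P n'
            | right _ => greedy P n'
            end
  end.

Lemma greedy_sequence (P : K -> Prop) :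
  (forall n, exists k, P k /\ ~ In k (greedy P n)) -> exists s, injective_seq_in P s.
Proof.
  intro Hall.
  assert (Hstep : forall n, exists k, greedy P (S n) = k :: greedy P n /\ P k /\ ~ In k (greedy P n)).
  { intro n. simpl. destruct (excluded_middle_informative _) as [H|H]; [|exfalso; auto].
    destruct (constructive_indefinite_description _ H) as [k [Pk Nk]]. exists k; auto. }
  set (s := fun n => hd (proj1_sig (constructive_indefinite_description _ (Hall n))) (greedy P (S n))).
  assert (Hs : forall n, greedy P (S n) = s n :: greedy P n /\ P (s n) /\ ~ In (s n) (greedy P n)).
  { intro n. destruct (Hstep n) as [k [E Hk]]. unfold s. rewrite E. auto. }
  assert (Hin : forall m n, (m < n)%nat -> In (s m) (greedy P n)).
  { intros m n Hmn. induction n as [|n IH]; [lia|].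
    rewrite (proj1 (Hs n)). destruct (Nat.eq_dec m n) as [->|ne]; [left|right; apply IH]; auto; lia. }
  exists s. split; [intro n; apply (Hs n)|].
  intros m n E. destruct (Nat.lt_total m n) as [H|[H|H]]; auto; exfalso.
  - apply (proj2 (proj2 (Hs n))). rewrite <- E. apply Hin; auto.
  - apply (proj2 (proj2 (Hs m))). rewrite E. apply Hin; auto.
Qed.

Fixpoint list_index (l : list K) (k : K) : nat :=
  match l with
  | nil => O
  | a :: t => if excluded_middle_informative (a = k) then O else S (list_index t k)
  end.

Lemma list_index_injective l k k' : In k l -> In k' l -> list_index l k = list_index l k' -> k = k'.
Proof.
  induction l as [|a t IH]; simpl; intros H1 H2 E; [contradiction|].
  destruct (excluded_middle_informative (a = k)) as [e1|n1];
  destruct (excluded_middle_informative (a = k')) as [e2|n2]; try discriminate.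
  - congruence.
  - injection E as E. apply IH; auto; [destruct H1|destruct H2]; tauto.
Qed.

Lemma countable_of_no_sequence (P : K -> Prop) :
  (~ exists s, injective_seq_in P s) -> exists idx : K -> nat, forall k k', P k -> P k' -> idx k = idx k' -> k = k'.
Proof.
  intro Hno.
  destruct (classic (forall n, exists k, P k /\ ~ In k (greedy P n))) as [Hall|Hsome].
  - exfalso. apply Hno, greedy_sequence, Hall.
  - apply not_all_ex_not in Hsome as [n Hn].
    assert (Hcov : forall k, P k -> In k (greedy P n)).
    { intros k Pk. apply NNPP; intro Hk. apply Hn. exists k; auto. }
    exists (list_index (greedy P n)). intros k k' Pk Pk'. apply list_index_injective; auto.
Qed.


(* A partial map [g] on [D] is absorbing when [(k, n) |-> g k n] injects [D * nat] into [D]. *)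
Definition absorbing (p : pmap K (nat -> K)) : Prop :=
  (forall k n, pdom p k -> pdom p (pval p k n)) /\
  (forall k n k' n', pdom p k -> pdom p k' -> pval p k n = pval p k' n' -> k = k' /\ n = n').

Lemma absorbing_glue (b0 : nat -> K) (C : pmap K (nat -> K) -> Prop) :
  is_chain C -> (forall p, C p -> absorbing p) -> absorbing (glue b0 C).
Proof.
  intros HC okC. split.
  - intros k n [p [Cp Hk]]. exists p. split; auto.
    rewrite (glue_val b0 C p) by auto. apply (okC p Cp); auto.
  - intros k n k' n' Hk Hk' E. destruct (glue_common b0 C k k' HC Hk Hk') as [p [Cp [Hpk Hpk']]].
    rewrite !(glue_val b0 C p) in E by auto. apply (okC p Cp); auto.
Qed.

(* An injective sequence [s] outside the domain can be absorbed too, with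
   [s m |-> (n |-> s <m, n>)]. *)
Lemma absorbing_extend (p : pmap K (nat -> K)) (s : nat -> K) :
  absorbing p -> injective_seq_in (fun k => ~ pdom p k) s ->
  exists q, absorbing q /\ extends p q /\ pdom q (s O).
Proof.
  intros [Pcl Pinj] [Sout Sinj].
  set (inv := fun k => epsilon (inhabits O) (fun m => s m = k)).
  assert (Hinv : forall m, inv (s m) = m).
  { intro m. apply Sinj. apply (epsilon_spec (inhabits O) (fun m' => s m' = s m)). eauto. }
  set (val := fun k n => if excluded_middle_informative (pdom p k) then pval p k n
                        else s (Cantor.to_nat (inv k, n))).
  exists (Build_pmap (fun k => pdom p k \/ exists m, k = s m) val).
  split; [split|split; [split|]]; simpl.
  - intros k n Hk. unfold val. destruct (excluded_middle_informative (pdom p k)); eauto.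
  - intros k n k' n' Hk Hk' E. unfold val in E.
    destruct (excluded_middle_informative (pdom p k)) as [a1|a1];
    destruct (excluded_middle_informative (pdom p k')) as [a2|a2].
    + apply Pinj; auto.
    + exfalso. apply (Sout (Cantor.to_nat (inv k', n'))). rewrite <- E. apply Pcl; auto.
    + exfalso. apply (Sout (Cantor.to_nat (inv k, n))). rewrite E. apply Pcl; auto.
    + destruct Hk as [|[m ->]]; [contradiction|]. destruct Hk' as [|[m' ->]]; [contradiction|].
      apply Sinj, cantor_injective in E. rewrite !Hinv in E. injection E as -> ->. auto.
  - auto.
  - intros k Hk. unfold val. destruct (excluded_middle_informative (pdom p k)); [auto|contradiction].
  - right; eauto.
Qed.

(* Absorption [|K * nat| = |K|] for infinite [K]: take a maximal absorbing map
   (Zorn); its complement is finite, so it can be merged into the odd values. *)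
Lemma card_le_prod_nat : card_le nat K -> card_le (K * nat) K.
Proof.
  intros [e He].
  destruct (zorn_pmap (fun _ : nat => e O) absorbing (Build_pmap (fun _ => False) (fun k _ => k)))
    as [[D g] [[Gcl Ginj] [_ Hmax]]].
  - split; simpl; intros; contradiction.
  - intros C HC okC _. apply absorbing_glue; auto.
  - simpl in Gcl, Ginj, Hmax.
    assert (Hno : ~ exists s, injective_seq_in (fun k => ~ D k) s).
    { intros [s Hs]. destruct (absorbing_extend (Build_pmap D g) s (conj Gcl Ginj) Hs)
        as [q [okq [Eq Hq]]].
      apply (proj1 Hs O), (Hmax q okq Eq), Hq. }
    destruct (classic (exists a0, D a0)) as [[a0 Ha0]|Hempty].
    2:{ exfalso. apply Hno. exists e. split; auto. intros n Hn. apply Hempty; eauto. }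
    destruct (countable_of_no_sequence (fun k => ~ D k) Hno) as [idx Hidx].
    exists (fun p => if excluded_middle_informative (D (fst p)) then g (fst p) (2 * snd p)%nat
                     else g a0 (S (2 * Cantor.to_nat (idx (fst p), snd p)))).
    intros [k n] [k' n'] E. cbn [fst snd] in E.
    destruct (excluded_middle_informative (D k)) as [a1|a1];
    destruct (excluded_middle_informative (D k')) as [a2|a2];
      apply Ginj in E as [Ek En]; auto; try lia.
    + subst. f_equal; lia.
    + assert (E' : Cantor.to_nat (idx k, n) = Cantor.to_nat (idx k', n')) by lia.
      apply cantor_injective in E'. injection E' as E1 ->. f_equal. apply Hidx; auto.
Qed.

End Absorption.

(* Types of cardinality at most [2^|K|] for an infinite [K], and their closure
   properties; they follow from [|K + K| <= |K * nat| <= |K|]. *)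
Section PowerBound.
Variable K : Type.
Hypothesis nat_le_K : card_le nat K.
Let prod_nat_le_K : card_le (K * nat) K := card_le_prod_nat K nat_le_K.

Definition pow_bounded (A : Type) : Prop := card_le A (K -> bool).

Lemma card_le_sum_K : card_le (K + K) K.
Proof.
  eapply card_le_trans; [|exact prod_nat_le_K].
  exists (fun e => match e with inl a => (a, O) | inr b => (b, 1%nat) end).
  intros [a|b] [a'|b'] E; injection E; intros; try discriminate; f_equal; auto.
Qed.

Lemma pow_bounded_of_le A : card_le A K -> pow_bounded A.
Proof.
  intro H. eapply card_le_trans; [exact H|]. apply card_le_singletons.
Qed.

Lemma pow_bounded_of_pow_nat A : card_le A (nat -> bool) -> pow_bounded A.
Proof. intro H. eapply card_le_trans; [exact H|]. apply card_le_pow, nat_le_K. Qed.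

Lemma pow_bounded_prod A B : pow_bounded A -> pow_bounded B -> pow_bounded (A * B).
Proof.
  intros HA HB. eapply card_le_trans; [apply (card_le_prod _ _ _ _ HA HB)|].
  eapply card_le_trans; [apply card_le_pow_sum|]. apply card_le_pow, card_le_sum_K.
Qed.

Lemma pow_bounded_seq A : pow_bounded A -> pow_bounded (nat -> A).
Proof.
  intro HA. eapply card_le_trans; [apply card_le_arrow, HA|].
  eapply card_le_trans; [apply card_le_curry|].
  apply card_le_pow. eapply card_le_trans; [|exact prod_nat_le_K].
  exists (fun p => (snd p, fst p)). intros [a b] [a' b'] E. injection E. intros; subst; auto.
Qed.

Lemma pow_bounded_option A : pow_bounded A -> pow_bounded (option A).
Proof.
  intros [f Hf].
  assert (Hbool : pow_bounded bool).
  { apply pow_bounded_of_pow_nat. exists (fun b _ => b). intros b b' E. exact (equal_f E O). }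
  eapply card_le_trans; [|apply (pow_bounded_prod (K -> bool) bool); [apply card_le_refl|exact Hbool]].
  exists (fun o => match o with Some a => (f a, true) | None => (fun _ => false, false) end).
  intros [a|] [a'|] E; try discriminate; try reflexivity.
  injection E as E. f_equal. auto.
Qed.

Lemma pow_bounded_list A : pow_bounded A -> pow_bounded (list A).
Proof.
  intro HA. eapply card_le_trans; [apply card_le_list|].
  apply pow_bounded_seq, pow_bounded_option, HA.
Qed.

Lemma pow_bounded_fun I A : card_le I K -> card_le A (nat -> bool) -> pow_bounded (I -> A).
Proof.
  intros HI HA. eapply card_le_trans; [apply card_le_arrow, HA|].
  eapply card_le_trans; [apply card_le_curry|].
  apply card_le_pow. eapply card_le_trans; [|exact prod_nat_le_K].
  apply card_le_prod; [exact HI|apply card_le_refl].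
Qed.

End PowerBound.

Theorem mainTheorem2 (X : BanachSpace) (hinf : infinite_dimensional X)
  (K : Type) (hK : biort_bound X K) :
  exists D : X -> Prop, dense D /\ card_le {x : X | D x} (K -> bool).
Proof.
  destruct (maximal_biorth_set_exists X) as [S HS].
  pose proof (hK _ _ _ (index_biorthogonal X S HS)) as index_le_K.
  pose proof (card_nat_le_biort_bound X K hinf hK) as nat_le_K.
  assert (X_bounded : pow_bounded K X).
  { eapply card_le_trans; [exists (encode X S); apply (encode_injective X S HS)|].
    apply (pow_bounded_prod K nat_le_K).
    - apply (pow_bounded_fun K nat_le_K); [exact index_le_K|apply card_le_R].
    - apply (pow_bounded_seq K nat_le_K), (pow_bounded_list K nat_le_K), (pow_bounded_prod K nat_le_K).
      + apply (pow_bounded_of_pow_nat K nat_le_K), card_le_R.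
      + apply pow_bounded_of_le, index_le_K. }
  exists (fun _ => True). split.
  - intros x eps Heps. exists x. split; auto. unfold vsub. rewrite vadd_opp, vnorm_zero. lra.
  - eapply card_le_trans; [|exact X_bounded].
    exists (@proj1_sig _ _). intros [a []] [b []] E. simpl in E. subst; auto.
Qed.
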